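(* Let $(X,d_X)$ and $(Y,d_Y)$ be nonempty finite metric spaces. Then $\overline{d_{\mathrm{GH}}}((X,d_X),(Y,d_Y))=0$ if and only if either there exists $c^*>0$ such that $(X,c^*d_X)$ is isometric to $(Y,d_Y)$, or $(Y,d_Y)$ is a one-point space.
   Context: The Gromov–Hausdorff distance is $d_{\mathrm{GH}}((X,d_X),(Y,d_Y))=\tfrac12\inf_{R}\sup_{(x,y),(x',y')\in R}|d_X(x,x')-d_Y(y,y')|$, the infimum over correspondences $R\subseteq X\times Y$ (relations whose projections onto $X$ and onto $Y$ are surjective). Define $\overline{d_{\mathrm{GH}}}((X,d_X),(Y,d_Y))=\inf_{c>0}d_{\mathrm{GH}}((X,c\,d_X),(Y,d_Y))$. *)

From mathcomp Require Import all_boot all_order all_algebra.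
From mathcomp Require Import boolp classical_sets reals.
Set Implicit Arguments. Unset Strict Implicit. Unset Printing Implicit Defensive.
Import Order.TTheory GRing.Theory Num.Theory.
Local Open Scope ring_scope.
Local Open Scope classical_set_scope.

Definition is_metric {R : realType} {T : finType} (d : T -> T -> R) : Prop :=
  (forall x y, 0 <= d x y) /\
  (forall x y, d x y = 0 <-> x = y) /\
  (forall x y, d x y = d y x) /\
  (forall x y z, d x z <= d x y + d y z).

Definition is_correspondence {T U : finType} (C : {set T * U}) : Prop :=
  (forall x : T, exists y : U, (x, y) \in C) /\
  (forall y : U, exists x : T, (x, y) \in C).

Definition distortion {R : realType} {T U : finType}
  (dX : T -> T -> R) (dY : U -> U -> R) (C : {set T * U}) : R :=
  sup [set r : R | exists p q : T * U,
         [/\ p \in C, q \in C & r = `|dX p.1 q.1 - dY p.2 q.2|] ].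

Definition dGH {R : realType} {T U : finType}
  (dX : T -> T -> R) (dY : U -> U -> R) : R :=
  2^-1 * inf [set r : R | exists C : {set T * U},
                 is_correspondence C /\ r = distortion dX dY C].

Definition dGHbar {R : realType} {T U : finType}
  (dX : T -> T -> R) (dY : U -> U -> R) : R :=
  inf [set r : R | exists c : R, 0 < c /\ r = dGH (fun x x' => c * dX x x') dY].

Definition isometric {R : realType} {T U : finType}
  (dX : T -> T -> R) (dY : U -> U -> R) : Prop :=
  exists f : T -> U, bijective f /\ forall x x', dY (f x) (f x') = dX x x'.

From mathcomp Require Import all_boot all_order all_algebra.
From mathcomp Require Import boolp classical_sets reals ring lra.
Import Order.TTheory GRing.Theory Num.Theory.
Local Open Scope ring_scope.
Local Open Scope classical_set_scope.

(* (<=) An isometry (X, c d_X) ~ (Y, d_Y) has a graph of distortion 0.  If Y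
   is a point, every distortion equals max c d_X, which tends to 0 with c.
   (=>) Suppose Y has two distinct points y, y' and no rescaling of X is
   isometric to Y.  For a fixed correspondence C, an elementary estimate on
   two affine functions c |-> c a - b (lemma [two_affine_terms_bound]) gives a
   positive lower bound on the distortion of C for all scales c > 0: otherwise
   the scale c* = d_Y(y,y') / d_X(x,x') would make C a zero-distortion
   correspondence, i.e. an isometry.  There are finitely many correspondences,
   so these bounds have a positive minimum, which bounds 2 dGHbar from below. *)

Section Distortion.
Context {R : realType} {T U : finType} {dX : T -> T -> R} {dY : U -> U -> R}.
Implicit Types (C : {set T * U}) (p q : T * U).

Definition distortion_terms C : set R := [set r : R | exists p q,
  [/\ p \in C, q \in C & r = `|dX p.1 q.1 - dY p.2 q.2|] ].

Lemma distortion_terms_bounded C : has_ubound (distortion_terms C).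
Proof.
exists (\big[Order.max/0]_(p : T * U) \big[Order.max/0]_(q : T * U)
          `|dX p.1 q.1 - dY p.2 q.2|).
move=> r [p [q [_ _ ->]]]; apply: le_trans (le_bigmax _ _ p).
exact: (le_bigmax _ (fun q => `|dX p.1 q.1 - dY p.2 q.2|) q).
Qed.

Lemma distortion_ub {C p q} : p \in C -> q \in C ->
  `|dX p.1 q.1 - dY p.2 q.2| <= distortion dX dY C.
Proof.
move=> pC qC; apply: (sup_upper_bound (E := distortion_terms C)).
  by split; [exists `|dX p.1 q.1 - dY p.2 q.2|, p, q | exact: distortion_terms_bounded].
by exists p, q.
Qed.

Lemma distortion_le {C B p0} : p0 \in C ->
  (forall p q, p \in C -> q \in C -> `|dX p.1 q.1 - dY p.2 q.2| <= B) ->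
  distortion dX dY C <= B.
Proof.
move=> p0C termB; apply: ge_sup; first by exists `|dX p0.1 p0.1 - dY p0.2 p0.2|, p0, p0.
by move=> r [p [q [pC qC ->]]]; apply: termB.
Qed.

Lemma distortion_ge0 {C p0} : p0 \in C -> 0 <= distortion dX dY C.
Proof. by move=> p0C; apply: le_trans (distortion_ub p0C p0C). Qed.

End Distortion.

Lemma correspondence_nonempty {T U : finType} {C : {set T * U}} (x0 : T) :
  is_correspondence C -> exists p, p \in C.
Proof. by case=> covT _; have [y Hy] := covT x0; exists (x0, y). Qed.

Lemma correspondence_setT {T U : finType} (x0 : T) (y0 : U) :
  is_correspondence [set: T * U]%SET.
Proof. by split=> [x|y]; [exists y0|exists x0]; rewrite inE. Qed.

Section GromovHausdorff.
Context {R : realType} {T U : finType} (x0 : T) (y0 : U).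
Implicit Types (dX : T -> T -> R) (dY : U -> U -> R) (C : {set T * U}).

Lemma dGH_le dX dY C : is_correspondence C ->
  dGH dX dY <= 2^-1 * distortion dX dY C.
Proof.
move=> corrC; rewrite /dGH ler_pM2l ?invr_gt0 ?ltr0n //.
apply: ge_inf; last by exists C.
exists 0 => r [C' [corrC' ->]].
by have [p pC'] := correspondence_nonempty x0 corrC'; apply: distortion_ge0 pC'.
Qed.

Lemma dGH_ge dX dY l :
  (forall C, is_correspondence C -> l <= distortion dX dY C) ->
  2^-1 * l <= dGH dX dY.
Proof.
move=> lowC; rewrite /dGH ler_pM2l ?invr_gt0 ?ltr0n //.
apply: lb_le_inf; last by move=> r [C [corrC ->]]; apply: lowC.
by exists (distortion dX dY [set: T * U]%SET), [set: T * U]%SET;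
  split=> //; apply: correspondence_setT.
Qed.

Lemma dGH_ge0 dX dY : 0 <= dGH dX dY.
Proof.
rewrite -(mulr0 2^-1); apply: dGH_ge => C corrC.
by have [p pC] := correspondence_nonempty x0 corrC; apply: distortion_ge0 pC.
Qed.

Lemma dGHbar_le dX dY c : 0 < c -> dGHbar dX dY <= dGH (fun x x' => c * dX x x') dY.
Proof.
move=> c0; apply: ge_inf; last by exists c.
by exists 0 => r [c' [_ ->]]; apply: dGH_ge0.
Qed.

Lemma dGHbar_ge dX dY l :
  (forall c, 0 < c -> l <= dGH (fun x x' => c * dX x x') dY) -> l <= dGHbar dX dY.
Proof.
move=> lowc; apply: lb_le_inf; first by exists (dGH (fun x x' => 1 * dX x x') dY), 1.
by move=> r [c [c0 ->]]; apply: lowc.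
Qed.

Lemma dGHbar_ge0 dX dY : 0 <= dGHbar dX dY.
Proof. by apply: dGHbar_ge => c _; apply: dGH_ge0. Qed.

Lemma dGHbar_eq0 dX dY :
  (forall e, 0 < e -> exists c C, [/\ 0 < c, is_correspondence C &
     distortion (fun x x' => c * dX x x') dY C <= e]) ->
  dGHbar dX dY = 0.
Proof.
move=> small; apply/eqP; rewrite eq_le dGHbar_ge0 andbT.
apply/ler_addgt0Pr => e e0; rewrite add0r.
have [c [C [c0 corrC distC]]] := small e e0.
apply: le_trans (dGHbar_le dX dY c c0) _.
apply: le_trans (dGH_le _ _ C corrC) _.
have half_ge0 : 0 <= 2^-1 :> R by rewrite invr_ge0 ler0n.
by apply: le_trans (ler_wpM2l half_ge0 distC) _; lra.
Qed.

End GromovHausdorff.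

Section Sufficiency.
Context {R : realType} {T U : finType} (x0 : T) (y0 : U).
Context {dX : T -> T -> R} {dY : U -> U -> R}.

(* The graph of an isometry is a correspondence of distortion 0. *)
Lemma isometric_dGHbar0 c : 0 < c -> isometric (fun x x' => c * dX x x') dY ->
  dGHbar dX dY = 0.
Proof.
move=> c0 [f [[g fK gK] isof]].
pose C := [set p : T * U | p.2 == f p.1]%SET.
have corrC : is_correspondence C.
  by split=> [x|y]; [exists (f x) | exists (g y)]; rewrite inE //= gK.
apply: (dGHbar_eq0 x0 y0) => e e0; exists c, C; split=> //.
have [p pC] := correspondence_nonempty x0 corrC.
apply: (distortion_le pC) => -[x y] [x' y']; rewrite !inE /= => /eqP-> /eqP->.
by rewrite isof subrr normr0 ltW.
Qed.

(* Shrinking X onto a one-point space Y costs c * diam X, which tends to 0. *)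
Lemma one_point_dGHbar0 : is_metric dX -> is_metric dY -> #|U| = 1%N ->
  dGHbar dX dY = 0.
Proof.
move=> [dX_ge0 _] [_ [dY0 _]] U1.
have dY_eq0 y y' : dY y y' = 0.
  by have [z Uz] := fintype1 U1; apply/dY0; rewrite (Uz y) (Uz y').
pose M := \big[Order.max/0]_(x : T) \big[Order.max/0]_(x' : T) dX x x'.
have dX_leM x x' : dX x x' <= M.
  apply: le_trans (le_bigmax _ _ x); exact: (le_bigmax _ (fun x' => dX x x') x').
have M1 : 0 < M + 1 by rewrite ltr_wpDl ?(le_trans (dX_ge0 x0 x0)).
apply: (dGHbar_eq0 x0 y0) => e e0; exists (e / (M + 1)), [set: T * U]%SET.
have c0 : 0 < e / (M + 1) by rewrite divr_gt0.
split=> //; first exact: correspondence_setT.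
apply: (distortion_le (p0 := (x0, y0))); rewrite ?inE // => p q _ _.
rewrite dY_eq0 subr0 ger0_norm; last exact: mulr_ge0 (ltW c0) (dX_ge0 _ _).
rewrite mulrAC ler_pdivrMr // ler_pM2l //.
by apply: le_trans (dX_leM _ _) _; rewrite lerDl.
Qed.

End Sufficiency.

Lemma isometric_of_exact_correspondence {R : realType} {T U : finType}
  {dX : T -> T -> R} {dY : U -> U -> R} {c : R} {C : {set T * U}} :
  is_metric dX -> is_metric dY -> 0 < c -> is_correspondence C ->
  (forall p q, p \in C -> q \in C -> c * dX p.1 q.1 = dY p.2 q.2) ->
  isometric (fun x x' => c * dX x x') dY.
Proof.
move=> [_ [dX0 _]] [_ [dY0 _]] c0 [covT covU] fitsC.
pose f x := xchoose (covT x); pose g y := xchoose (covU y).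
have Cf x : (x, f x) \in C := xchooseP (covT x).
have Cg y : (g y, y) \in C := xchooseP (covU y).
exists f; split; last by move=> x x'; rewrite (fitsC _ _ (Cf x) (Cf x')).
exists g => [x|y]; first apply/esym/dX0.
  have /eqP := fitsC _ _ (Cf x) (Cg (f x)); rewrite /= (proj2 (dY0 _ _) erefl).
  by rewrite mulf_eq0 gt_eqF //= => /eqP.
by apply/dY0; rewrite -(fitsC _ _ (Cf (g y)) (Cg y)) /= (proj2 (dX0 _ _) erefl) mulr0.
Qed.

(* If two affine functions c |-> c a - b and c |-> c a' - b' are both at most g
   in absolute value, then the second one, evaluated at the zero b / a of the
   first, is controlled by g: the scale c cannot fit both pairs at once. *)
Lemma two_affine_terms_bound (R : realFieldType) (a a' b b' c g : R) :
  0 < a -> 0 <= a' -> `|c * a - b| <= g -> `|c * a' - b'| <= g ->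
  `|b / a * a' - b'| * a <= g * (a + a').
Proof.
move=> a0 a'0 first second.
have split_term : `|b / a * a' - b'| <= `|c * a' - b'| + `|b / a - c| * a'.
  have -> : b / a * a' - b' = (c * a' - b') + (b / a - c) * a' by ring.
  by apply: le_trans (ler_normD _ _) _; rewrite normrM (ger0_norm a'0).
have scaled : `|b / a - c| * a = `|c * a - b|.
  by rewrite -{2}(ger0_norm (ltW a0)) -normrM mulrBl divfK ?gt_eqF // distrC.
have := ler_wpM2r (ltW a0) split_term.
rewrite mulrDl (mulrAC `|b / a - c|) scaled => bound.
have := ler_wpM2r (ltW a0) second; have := ler_wpM2r a'0 first.
have := normr_ge0 (c * a - b); nra.
Qed.

Section Necessity.
Context {R : realType} {T U : finType} {dX : T -> T -> R} {dY : U -> U -> R}.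
Hypotheses (mX : is_metric dX) (mY : is_metric dY).
Hypothesis not_isometric :
  ~ exists c, 0 < c /\ isometric (fun x x' => c * dX x x') dY.
Context {y y' : U}.
Hypothesis yy' : y != y'.

Lemma correspondence_distortion_bound {C : {set T * U}} : is_correspondence C ->
  exists L, 0 < L /\ forall c, 0 < c ->
    L <= distortion (fun x x' => c * dX x x') dY C.
Proof.
have [dX_ge0 _] := mX; have [dY_ge0 [dY0 _]] := mY.
move=> corrC; have [_ covU] := corrC.
have [x Cx] := covU y; have [x' Cx'] := covU y'.
have dyy'0 : 0 < dY y y'.
  by rewrite lt_def dY_ge0 andbT; apply: contra yy' => /eqP /dY0 ->.
have termyy' c : `|c * dX x x' - dY y y'| <= distortion (fun x x' => c * dX x x') dY C.
  exact: (distortion_ub Cx Cx').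
have [dxx'0 | dxx'_neq0] := eqVneq (dX x x') 0.
  exists (dY y y'); split=> // c _; apply: le_trans (termyy' c).
  by rewrite dxx'0 mulr0 sub0r normrN gtr0_norm.
have dxx'_gt0 : 0 < dX x x' by rewrite lt_def dxx'_neq0 dX_ge0.
pose cs := dY y y' / dX x x'.
have cs0 : 0 < cs by rewrite divr_gt0.
have [[p [q [pC qC misfit]]] | fits] := pselect (exists p q,
    [/\ p \in C, q \in C & cs * dX p.1 q.1 != dY p.2 q.2]); last first.
  case: not_isometric; exists cs; split=> //.
  apply: (isometric_of_exact_correspondence mX mY cs0 corrC) => p q pC qC.
  apply/eqP; apply: contrapT => misfit.
  by apply: fits; exists p, q; split=> //; apply/negP.
have dpq0 : 0 <= dX p.1 q.1 := dX_ge0 _ _.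
exists (`|cs * dX p.1 q.1 - dY p.2 q.2| * dX x x' / (dX x x' + dX p.1 q.1)).
split; first by rewrite divr_gt0 ?mulr_gt0 ?normr_gt0 ?subr_eq0 ?ltr_wpDr.
move=> c c0; rewrite ler_pdivrMr ?ltr_wpDr //.
exact: two_affine_terms_bound (termyy' c) (distortion_ub pC qC).
Qed.

End Necessity.

Lemma finite_common_positive (R : realDomainType) (K : finType) (P : K -> R -> Prop) :
  (forall k l l', 0 < l' -> l' <= l -> P k l -> P k l') ->
  (forall k, exists l, 0 < l /\ P k l) -> exists l, 0 < l /\ forall k, P k l.
Proof.
move=> P_down P_some.
suff /(_ (enum K)) [l [l0 Pl]] : forall s : seq K, exists l, 0 < l /\ forall k, k \in s -> P k l.
  by exists l; split=> // k; apply: Pl; rewrite mem_enum.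
elim=> [|k s [l1 [l10 Ps]]]; first by exists 1.
have [l2 [l20 Pk]] := P_some k.
have lmin0 : 0 < Num.min l1 l2 by rewrite lt_min l10 l20.
exists (Num.min l1 l2); split=> // k'; rewrite inE => /orP [/eqP -> | k's].
  by apply: P_down Pk; rewrite // ge_min lexx orbT.
by apply: P_down (Ps _ k's); rewrite // ge_min lexx.
Qed.

Lemma dGHbar_gt0 {R : realType} {T U : finType} {dX : T -> T -> R} {dY : U -> U -> R}
  (x0 : T) {y y' : U} : is_metric dX -> is_metric dY -> y != y' ->
  ~ (exists c, 0 < c /\ isometric (fun x x' => c * dX x x') dY) ->
  0 < dGHbar dX dY.
Proof.
move=> mX mY yy' not_iso.
have [L [L0 LC]] : exists L : R, 0 < L /\ forall C, is_correspondence C ->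
    forall c, 0 < c -> L <= distortion (fun x x' => c * dX x x') dY C.
  apply: finite_common_positive => [C l l' _ l'l Pl corrC c c0 | C].
    exact: le_trans l'l (Pl corrC c c0).
  have [corrC | ncorrC] := pselect (is_correspondence C); last by exists 1.
  have [L [L0 LC]] := correspondence_distortion_bound mX mY not_iso yy' corrC.
  by exists L; split=> // _.
apply: lt_le_trans (_ : 2^-1 * L <= _); first by rewrite mulr_gt0 ?invr_gt0.
by apply: dGHbar_ge => c c0; apply: (dGH_ge x0 y) => C corrC; apply: LC.
Qed.

Local Close Scope classical_set_scope.

Theorem mainTheorem4 (R : realType) (T U : finType)
  (dX : T -> T -> R) (dY : U -> U -> R) :
  is_metric dX -> is_metric dY -> (0 < #|T|)%N -> (0 < #|U|)%N ->
  (dGHbar dX dY = 0 <->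
    ((exists c : R, 0 < c /\ isometric (fun x x' => c * dX x x') dY)
     \/ #|U| = 1%N)).
Proof.
move=> mX mY /card_gt0P [x0 _] U0; have /card_gt0P [y0 _] := U0.
split; last first.
  case=> [[c [c0 iso]] | U1].
    exact: (isometric_dGHbar0 x0 y0 c c0 iso).
  exact: (one_point_dGHbar0 x0 y0 mX mY U1).
move=> dGHbar0; have [U1 | U_ne1] := eqVneq #|U| 1%N; [by right | left].
apply: contrapT => not_iso.
have [y [y' [_ _ yy']]] : exists y y' : U, [/\ y \in U, y' \in U & y != y'].
  by apply/card_gt1P; rewrite ltn_neqAle eq_sym U_ne1 U0.
by have := dGHbar_gt0 x0 mX mY yy' not_iso; rewrite dGHbar0 ltxx.
Qed.
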